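(* Let $G$ be a connected graph with $|V(G)| \ge 3$. Then $\mathrm{Dist}'(G) \le \det'(G) + 1$.
   Context: The distinguishing index $\mathrm{Dist}'(G)$ is the minimum number of colors in a coloring of the edges of $G$ (not necessarily proper) such that the only automorphism of $G$ preserving every edge color is the identity. For a graph $G$ with at most one isolated vertex and no component isomorphic to $K_2$, an edge subset $T$ is an edge determining set if the only automorphism $\phi$ of $G$ satisfying $\{\phi(u),\phi(v)\}=\{u,v\}$ for all $\{u,v\}\in T$ is the identity; the determining index $\det'(G)$ is the minimum size of an edge determining set. *)

(* A finite simple graph is a symmetric irreflexive relation
   [g : rel T] on a finType [T] (vertex set = T). *)
From mathcomp Require Import all_boot all_fingroup.
Set Implicit Arguments.
Unset Strict Implicit.
Unset Printing Implicit Defensive.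

Definition simple_graph (T : finType) (g : rel T) : Prop :=
  symmetric g /\ irreflexive g.

Definition connected_graph (T : finType) (g : rel T) : Prop :=
  forall x y : T, connect g x y.

Definition is_aut (T : finType) (g : rel T) (phi : {perm T}) : Prop :=
  forall x y : T, g (phi x) (phi y) = g x y.

Definition edges (T : finType) (g : rel T) : {set {set T}} :=
  [set [set x; y] | x in T, y in T & g x y].

Definition uses_at_most (T : finType) (g : rel T) (c : {set T} -> nat) (k : nat)
  : Prop := forall s, s \in edges g -> c s < k.

Definition distinguishing_edge_col (T : finType) (g : rel T) (c : {set T} -> nat)
  : Prop :=
  forall phi : {perm T}, is_aut g phi ->
    (forall s, s \in edges g -> c (phi @: s) = c s) -> phi = 1%g.

Definition edge_determining (T : finType) (g : rel T) (S : {set {set T}}) : Prop :=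
  S \subset edges g /\
  forall phi : {perm T}, is_aut g phi ->
    (forall s, s \in S -> phi @: s = s) -> phi = 1%g.

Definition is_least (P : nat -> Prop) (n : nat) : Prop :=
  P n /\ forall m, P m -> n <= m.

Definition is_dist_index (T : finType) (g : rel T) (d : nat) : Prop :=
  is_least (fun k => exists c : {set T} -> nat,
                uses_at_most g c k /\ distinguishing_edge_col g c) d.

Definition is_det_index (T : finType) (g : rel T) (t : nat) : Prop :=
  is_least (fun k => exists S : {set {set T}}, edge_determining g S /\ #|S| = k) t.

(* Colour the edges of a minimum edge determining set S with the distinct
   colours 1, ..., |S| and every other edge with 0. A colour-preserving
   automorphism maps each edge of S to an edge of the same (unique) colour,
   i.e. fixes it setwise, so it is the identity because S is determining.
   Hence Dist'(G) <= |S| + 1 = det'(G) + 1. *)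
From mathcomp Require Import all_boot all_fingroup.

Set Implicit Arguments.
Unset Strict Implicit.
Unset Printing Implicit Defensive.

Section DeterminingColouring.

Variables (T : finType) (g : rel T) (S : {set {set T}}).

Definition determining_col (e : {set T}) : nat :=
  if e \in S then (index e (enum S)).+1 else 0.

Lemma determining_col_lt e : determining_col e < #|S| + 1.
Proof.
rewrite /determining_col addn1 ltnS; case: ifP => // eS.
by rewrite cardE index_mem mem_enum.
Qed.

Lemma determining_col_inj e f :
  e \in S -> determining_col f = determining_col e -> f = e.
Proof.
rewrite /determining_col => eS; rewrite eS; case: ifP => // fS [idx_fe].
by rewrite -(nth_index e (_ : f \in enum S)) ?mem_enum // idx_fe nth_index ?mem_enum.
Qed.

Lemma determining_col_distinguishing :
  edge_determining g S -> distinguishing_edge_col g determining_col.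
Proof.
move=> [Sg detS] phi phi_aut phi_col; apply: detS => // e eS.
exact: determining_col_inj (phi_col e (subsetP Sg e eS)).
Qed.

End DeterminingColouring.

Lemma dist_col_of_edge_determining (T : finType) (g : rel T) S :
  edge_determining g S ->
  exists c, uses_at_most g c (#|S| + 1) /\ distinguishing_edge_col g c.
Proof.
move=> detS; exists (determining_col S); split.
- by move=> e _; apply: determining_col_lt.
- exact: determining_col_distinguishing.
Qed.

Theorem theorem3 (T : finType) (g : rel T) (d t : nat) :
  simple_graph g -> connected_graph g -> 3 <= #|T| ->
  is_dist_index g d -> is_det_index g t ->
  d <= t + 1.
Proof.
move=> _ _ _ [_ d_least] [[S [detS <-]] _].
exact/d_least/dist_col_of_edge_determining.
Qed.
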